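(* Suppose we have $n\ge3$ agents with additive, identical, normalized valuations, provided with a prediction of accuracy $\eta<1-\frac{1}{2(n-1+2a)}$ for some given $a\in(0,1]$; that is, the allowed error between the prediction and the true valuation is $1-\eta>\frac{1}{2(n-1+2a)}$. Then there is no online algorithm that guarantees an $a$-EFX allocation for all instances with error at most $1-\eta$, even when $T'=T=n+1$ and the prediction and the true valuation are $3$-value functions.
   Context: Online fair division with predictions and identical valuations: agents $[n]$; goods $g_1,\dots,g_T$ arrive one per time step; all agents share a true additive normalized valuation $v$ ($v(g_t)\ge0$, $\sum_{t\in[T]}v(g_t)=1$, $v(S)=\sum_{g\in S}v(g)$), and before any arrival the algorithm receives a prediction $p=(p(g_1),\dots,p(g_{T'}))$ (an additive normalized valuation over $T'$ predicted goods) and the accuracy level. Error $\frac12\sum_{t=1}^{\max\{T,T'\}}|p(g_t)-v(g_t)|$ (missing entries set to $0$); accuracy $\eta$ means the error is at most $1-\eta$. At time $t$, $v(g_t)$ is revealed and $g_t$ must be irrevocably allocated. For $S\ne\emptyset$, $\bar S=S\setminus\{g\}$ with $g\in\arg\max_{g'\in S}v(S\setminus\{g'\})$, $\bar\emptyset=\emptyset$. An allocation is $a$-EFX if $v(A_i)\ge a\cdot v(\bar A_j)$ for all $i,j$. A function is $k$-value if it takes at most $k$ distinct values. *)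

From mathcomp Require Import all_boot all_order all_algebra.
Set Implicit Arguments. Unset Strict Implicit. Unset Printing Implicit Defensive.
Import Order.TTheory GRing.Theory Num.Theory.
Local Open Scope ring_scope.

Section OnlineFD.
Variable R : realFieldType.

Definition normalized (T : nat) (v : 'I_T -> R) : Prop :=
  (forall t, 0 <= v t) /\ \sum_(t < T) v t = 1.

Definition kvalue (k : nat) (T : nat) (v : 'I_T -> R) : Prop :=
  (size (undup [seq v t | t <- enum 'I_T]) <= k)%N.

Definition pred_error (T : nat) (p v : 'I_T -> R) : R :=
  2^-1 * \sum_(t < T) `|p t - v t|.

Definition bval (T : nat) (v : 'I_T -> R) (S : {set 'I_T}) : R :=
  \sum_(t in S) v t.

Definition bval_bar (T : nat) (v : 'I_T -> R) (S : {set 'I_T}) : R :=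
  if S == set0 then 0
  else \big[Order.max/0]_(g in S) bval v (S :\ g).

Definition bundle (n T : nat) (alloc : 'I_T -> 'I_n) (i : 'I_n) : {set 'I_T} :=
  [set t | alloc t == i].

Definition aEFX (n T : nat) (a : R) (v : 'I_T -> R) (alloc : 'I_T -> 'I_n) : Prop :=
  forall i j : 'I_n, a * bval_bar v (bundle alloc j) <= bval v (bundle alloc i).

(* A deterministic online algorithm (for n agents, T goods, T' = T predicted
   goods): given the prediction p (the accuracy level and n, T are fixed
   parameters known to it) and the sequence of values v(g_1),...,v(g_t)
   revealed so far, it outputs the agent receiving g_t. *)
Definition online_alg (n T : nat) := ('I_T -> R) -> seq R -> 'I_n.

Definition run_alg (n T : nat) (alg : online_alg n T) (p v : 'I_T -> R)
  : 'I_T -> 'I_n :=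
  fun t => alg p (take t.+1 [seq v s | s <- enum 'I_T]).

End OnlineFD.

From mathcomp Require Import all_boot all_order all_algebra.
From mathcomp Require Import ring lra zify.

(* The adversary predicts n - 1 goods of value s = a m / 2, one good of value
   m and a last good carrying the remaining mass, which is at least 1/2. Run on
   the prediction itself, the algorithm must put two goods x < y into one bundle
   by the time y arrives. If y has value s, the adversary switches to the
   instance where every good but the last has value s except good y + 1, which
   gets a s / 2; the algorithm has seen identical values up to y. Otherwise
   v(y) >= m and any other good z of value s has v(z) < a v(y). Either way a
   good z outside {x, y} has v(z) < a v(y), which defeats a-EFX: if z shares its
   bundle, only n - 1 goods besides y and z are left for the n bundles, so some
   agent gets nothing; otherwise the agent of z values her bundle at v(z).
   All values but the last are at most m, so the error is at most n m; as m can
   be taken arbitrarily small, the accuracy hypothesis is only used through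
   1 - eta > 0. *)

Set Implicit Arguments.
Unset Strict Implicit.
Unset Printing Implicit Defensive.
Import Order.TTheory GRing.Theory Num.Theory.
Local Open Scope ring_scope.

Section Allocations.
Variable R : realFieldType.

Lemma le_bval_bar (T : nat) (v : 'I_T -> R) (S : {set 'I_T}) (x y : 'I_T) :
  (forall t, 0 <= v t) -> x \in S -> y \in S -> x != y ->
  v y <= bval_bar v S.
Proof.
move=> v_ge0 xS yS xy; rewrite /bval_bar.
have /negbTE -> : S != set0 by apply/set0Pn; exists x.
apply: le_trans (le_bigmax_cond _ _ xS).
rewrite /bval (bigD1 y) /=; last by rewrite !inE eq_sym xy yS.
by rewrite lerDl sumr_ge0.
Qed.

Lemma exists_empty_bundle (n T : nat) (f : 'I_T -> 'I_n) (S : {set 'I_T}) :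
  (#|S| < n)%N -> (forall t, exists2 u, u \in S & f u = f t) ->
  exists i, bundle f i = set0.
Proof.
move=> S_lt_n cover.
have : ~~ ([set: 'I_n] \subset f @: S).
  apply/negP => /subset_leq_card; rewrite cardsT card_ord => n_le.
  by have := leq_trans n_le (leq_imset_card f S); rewrite leqNgt S_lt_n.
case/subsetPn => i _ iNfS; exists i; apply/setP => t; rewrite !inE.
apply/negP => /eqP fti; have [u uS fut] := cover t.
by move: iNfS; rewrite -fti -fut imset_f.
Qed.

Lemma not_aEFX_pair (n T : nat) (a : R) (v : 'I_T -> R) (f : 'I_T -> 'I_n)
    (x y z : 'I_T) :
  (T <= n.+1)%N -> 0 < a -> (forall t, 0 <= v t) ->
  x != y -> f x = f y -> z != x -> z != y -> v z < a * v y ->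
  ~ aEFX a v f.
Proof.
move=> T_le a_gt0 v_ge0 xy fxy zx zy vz_lt EFX.
have [i vi_le] : exists i, bval v (bundle f i) <= v z.
  case: (pickP [pred w | (w != z) && (f w == f z)]) => [w /andP[wz /eqP fwz]|alone].
    (* z shares its bundle, so the T - 2 goods other than y and z meet every
       nonempty bundle. *)
    have S_lt_n : (#|~: [set y; z]| < n)%N.
      have := cardsC [set y; z]; rewrite cards2 eq_sym zy card_ord /=.
      have := ltn_ord (f x); lia.
    have [i empty_i] : exists i, bundle f i = set0.
      apply: (exists_empty_bundle S_lt_n).
      have xS : x \in ~: [set y; z] by rewrite !inE negb_or xy eq_sym zx.
      move=> t; case: (eqVneq t y) => [->|ty]; first by exists x.
      case: (eqVneq t z) => [->|tz]; last by exists t; rewrite // !inE negb_or ty tz.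
      case: (eqVneq w y) => [wy|wy]; first by exists x; rewrite // fxy -wy.
      by exists w; rewrite // !inE negb_or wy wz.
    by exists i; rewrite /bval empty_i big_set0.
  exists (f z); have -> : bundle f (f z) = [set z].
    apply/setP => t; rewrite !inE; case: (eqVneq t z) => [->|tz]; first by rewrite eqxx.
    by have := alone t; rewrite /= tz.
  by rewrite /bval big_set1.
have vy_le : v y <= bval_bar v (bundle f (f y)).
  by apply: (le_bval_bar (x := x)); rewrite ?inE ?fxy.
rewrite -(ler_pM2l a_gt0) in vy_le; have := EFX i (f y); lra.
Qed.

Lemma run_alg_prefix (n T : nat) (alg : online_alg R n T) (p v1 v2 : 'I_T -> R)
    (t : 'I_T) :
  (forall u : 'I_T, (u <= t)%N -> v1 u = v2 u) ->
  run_alg alg p v1 t = run_alg alg p v2 t.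
Proof.
move=> v12; rewrite /run_alg -(map_take _ v1) -(map_take _ v2); congr (alg p _).
by apply/eq_in_map => u /index_ltn; rewrite index_enum_ord; apply: v12.
Qed.

Lemma exists_collision (n T : nat) (f : 'I_T -> 'I_n) :
  (n < T)%N -> exists x y : 'I_T, (x < y)%N /\ f x = f y.
Proof.
move=> n_lt_T.
have /injectivePn[x [y xy fxy]] : ~~ injectiveb f.
  by apply/injectiveP => /leq_card; rewrite !card_ord leqNgt n_lt_T.
case: (ltngtP x y) => [lt|gt|eq]; first by exists x, y.
  by exists y, x.
by move: xy; rewrite (val_inj eq) eqxx.
Qed.

Lemma kvalue_range (T : nat) (v : 'I_T -> R) (s : seq R) :
  (forall t, v t \in s) -> kvalue (size s) v.
Proof.
move=> v_in; rewrite /kvalue uniq_leq_size ?undup_uniq // => r.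
by rewrite mem_undup => /mapP[t _ ->].
Qed.

End Allocations.

Section Remainder.
Variables (R : realFieldType) (n : nat).

Definition with_remainder (w : nat -> R) (t : 'I_n.+1) : R :=
  if t == n :> nat then 1 - \sum_(j < n) w j else w t.

Lemma with_remainder_lt (w : nat -> R) (t : 'I_n.+1) :
  (t < n)%N -> with_remainder w t = w t.
Proof. by move=> t_lt_n; rewrite /with_remainder ltn_eqF. Qed.

Lemma with_remainder_max (w : nat -> R) :
  with_remainder w ord_max = 1 - \sum_(j < n) w j.
Proof. by rewrite /with_remainder eqxx. Qed.

Lemma with_remainder_widen (w : nat -> R) (i : 'I_n) :
  with_remainder w (widen_ord (leqnSn n) i) = w i.
Proof. by apply: with_remainder_lt; rewrite /= ltn_ord. Qed.

Lemma normalized_with_remainder (w : nat -> R) :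
  (forall i, 0 <= w i) -> \sum_(j < n) w j <= 1 -> normalized (with_remainder w).
Proof.
move=> w_ge0 sum_le1; split.
  by move=> t; rewrite /with_remainder; case: eqP => _; rewrite ?subr_ge0.
rewrite big_ord_recr with_remainder_max /=.
by under eq_bigr do rewrite with_remainder_widen; rewrite addrC subrK.
Qed.

Lemma pred_error_with_remainder (w1 w2 : nat -> R) :
  pred_error (with_remainder w1) (with_remainder w2)
    <= \sum_(j < n) `|w1 j - w2 j|.
Proof.
rewrite /pred_error big_ord_recr /= !with_remainder_max.
under eq_bigr do rewrite !with_remainder_widen.
have : `|(1 - \sum_(j < n) w1 j) - (1 - \sum_(j < n) w2 j)|
         <= \sum_(j < n) `|w1 j - w2 j|.
  have -> : (1 - \sum_(j < n) w1 j) - (1 - \sum_(j < n) w2 j)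
            = \sum_(j < n) (w2 j - w1 j) by rewrite sumrB; ring.
  apply: le_trans (ler_norm_sum _ _ _) _.
  by apply: ler_sum => j _; rewrite distrC.
lra.
Qed.

Lemma kvalue_with_remainder (w : nat -> R) (b c : R) :
  (forall i, w i \in [:: b; c]) -> kvalue 3 (with_remainder w).
Proof.
move=> w_in; apply: (@kvalue_range _ _ _ [:: 1 - \sum_(j < n) w j; b; c]) => t.
by rewrite /with_remainder; case: eqP => _; rewrite ?mem_head // inE w_in orbT.
Qed.

End Remainder.

Arguments with_remainder {R} n w t.

Section Adversary.
Variables (R : realFieldType) (n : nat) (a m : R).
Hypotheses (n_ge3 : (3 <= n)%N) (a_gt0 : 0 < a) (a_le1 : a <= 1)
  (m_gt0 : 0 < m) (nm_le_half : n%:R * m <= 2^-1).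

Local Notation s := (a * m / 2).
Local Notation s' := (a * s / 2).

Definition predicted_values (i : nat) : R := if i == n.-1 then m else s.
Definition deviated_values (k i : nat) : R := if i == k then s' else s.

Local Notation p := (with_remainder n predicted_values).

Local Lemma s_gt0 : 0 < s. Proof. by have := mulr_gt0 a_gt0 m_gt0; lra. Qed.
Local Lemma s_lt_am : s < a * m. Proof. by have := mulr_gt0 a_gt0 m_gt0; lra. Qed.
Local Lemma s'_lt_as : s' < a * s. Proof. by have := mulr_gt0 a_gt0 s_gt0; lra. Qed.
Local Lemma s_le_m : s <= m.
Proof. by have := ler_piMl (ltW m_gt0) a_le1; have := s_gt0; lra. Qed.

Local Lemma s'_bounds : 0 <= s' <= m.
Proof.
have as_gt0 := mulr_gt0 a_gt0 s_gt0; have as_le_s := ler_piMl (ltW s_gt0) a_le1.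
by apply/andP; split; have := s_le_m; lra.
Qed.

Local Lemma m_le_half : m <= 2^-1.
Proof.
apply: le_trans nm_le_half; apply: ler_peMl; first exact: ltW.
by rewrite ler1n (leq_trans _ n_ge3).
Qed.

Lemma values_bounds (w : nat -> R) (b : R) :
  0 <= b <= m -> (forall i, w i \in [:: s; b]) -> forall i, 0 <= w i <= m.
Proof.
move=> b_bd w_in i; move: (w_in i); rewrite !inE => /orP[] /eqP -> //.
by rewrite (ltW s_gt0) s_le_m.
Qed.

Lemma predicted_values_in i : predicted_values i \in [:: s; m].
Proof. by rewrite /predicted_values; case: eqP => _; rewrite !inE eqxx ?orbT. Qed.

Lemma predicted_values_bounds i : 0 <= predicted_values i <= m.
Proof.
by rewrite /predicted_values; case: eqP => _; rewrite ?lexx ?(ltW m_gt0) ?(ltW s_gt0) ?s_le_m.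
Qed.

Lemma deviated_values_in k i : deviated_values k i \in [:: s; s'].
Proof. by rewrite /deviated_values; case: eqP => _; rewrite !inE eqxx ?orbT. Qed.

Lemma sum_le_half (w : nat -> R) :
  (forall i, 0 <= w i <= m) -> \sum_(j < n) w j <= 2^-1.
Proof.
move=> w_bd; apply: le_trans nm_le_half.
have -> : n%:R * m = \sum_(j < n) m by rewrite sumr_const card_ord mulr_natl.
by apply: ler_sum => j _; case/andP: (w_bd j).
Qed.

Lemma normalized_small (w : nat -> R) :
  (forall i, 0 <= w i <= m) -> normalized (with_remainder n w).
Proof.
move=> w_bd; apply: normalized_with_remainder; first by move=> i; case/andP: (w_bd i).
by rewrite (le_trans (sum_le_half w_bd)) // invf_le1 ?ler1n.
Qed.

Lemma adversary_instance (w : nat -> R) (b : R) :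
  0 <= b <= m -> (forall i, w i \in [:: s; b]) ->
  [/\ normalized p, normalized (with_remainder n w), kvalue 3 p
    & kvalue 3 (with_remainder n w)] /\
  pred_error p (with_remainder n w) <= n%:R * m.
Proof.
move=> b_bd w_in.
have w_bd := values_bounds b_bd w_in.
have pw_bd := predicted_values_bounds.
split; first by split; [exact: normalized_small | exact: normalized_small
                       | exact: kvalue_with_remainder predicted_values_in
                       | exact: kvalue_with_remainder w_in].
apply: le_trans (pred_error_with_remainder n predicted_values w) _.
have -> : n%:R * m = \sum_(j < n) m by rewrite sumr_const card_ord mulr_natl.
apply: ler_sum => j _; rewrite ler_norml.
by case/andP: (w_bd j) (pw_bd j) => ? ? /andP[? ?]; apply/andP; split; lra.
Qed.

Lemma deviation_defeats (alg : online_alg R n n.+1) (x y : 'I_n.+1) :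
  (x < y)%N -> (y < n.-1)%N -> run_alg alg p p x = run_alg alg p p y ->
  let v := with_remainder n (deviated_values y.+1) in
  ~ aEFX a v (run_alg alg p v).
Proof.
move=> xy y_lt fxy v.
have k_lt : (y.+1 < n.+1)%N by lia.
have v_agrees (u : 'I_n.+1) : (u <= y)%N -> v u = p u.
  move=> uy; have u_lt : (u < n)%N by lia.
  by rewrite /v !with_remainder_lt // /predicted_values /deviated_values !ifF //; lia.
have same_run (t : 'I_n.+1) : (t <= y)%N -> run_alg alg p v t = run_alg alg p p t.
  by move=> ty; apply: run_alg_prefix => u ut; rewrite v_agrees // (leq_trans ut ty).
apply: (@not_aEFX_pair _ _ _ _ _ _ x y (Ordinal k_lt)) => //.
- exact: (normalized_small (values_bounds s'_bounds (deviated_values_in _))).1.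
- by rewrite -val_eqE /=; lia.
- by rewrite !same_run // ltnW.
- by rewrite -val_eqE /=; lia.
- by rewrite -val_eqE /=; lia.
- by rewrite /v !with_remainder_lt /= /deviated_values ?eqxx ?ifF ?s'_lt_as //; lia.
Qed.

Lemma prediction_defeats (alg : online_alg R n n.+1) (x y : 'I_n.+1) :
  (x < y)%N -> (n.-1 <= y)%N -> run_alg alg p p x = run_alg alg p p y ->
  ~ aEFX a p (run_alg alg p p).
Proof.
move=> xy y_ge fxy.
have one_lt : (1 < n.+1)%N by lia.
pose z : 'I_n.+1 := if x == 0 :> nat then Ordinal one_lt else ord0.
have z_le1 : (z <= 1)%N by rewrite /z; case: ifP.
have zx : z != x by rewrite /z; case: (nat_of_ord x =P 0)%N => x0; rewrite -val_eqE /=; lia.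
have pz : p z = s.
  by rewrite with_remainder_lt /predicted_values ?ifF //; lia.
have m_le_py : m <= p y.
  rewrite /with_remainder; case: eqP => [_|y_ne]; last first.
    by rewrite /predicted_values ifT ?lexx //; have := ltn_ord y; lia.
  by have := sum_le_half predicted_values_bounds; have := m_le_half; lra.
apply: (@not_aEFX_pair _ _ _ _ _ _ x y z) => //.
- exact: (normalized_small predicted_values_bounds).1.
- by rewrite -val_eqE /=; lia.
- by rewrite -val_eqE /=; lia.
- by rewrite pz (lt_le_trans s_lt_am) // ler_pM2l.
Qed.

Lemma adversary_wins (alg : online_alg R n n.+1) :
  exists p v : 'I_n.+1 -> R,
    [/\ normalized p, normalized v, kvalue 3 p & kvalue 3 v] /\
    pred_error p v <= n%:R * m /\ ~ aEFX a v (run_alg alg p v).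
Proof.
have [x [y [xy fxy]]] := exists_collision (run_alg alg p p) (ltnSn n).
exists p; case: (ltnP y n.-1) => [y_lt|y_ge].
  have [inst err] := adversary_instance s'_bounds (deviated_values_in y.+1).
  exists (with_remainder n (deviated_values y.+1)); do 2!split => //.
  exact: deviation_defeats xy y_lt fxy.
have m_bd : 0 <= m <= m by rewrite lexx ltW.
have [inst err] := adversary_instance m_bd predicted_values_in.
by exists p; do 2!split => //; exact: prediction_defeats xy y_ge fxy.
Qed.

End Adversary.

Theorem lemma4p7 (R : realFieldType) (n : nat) (a eta : R) :
  (3 <= n)%N -> 0 < a <= 1 ->
  1 / (2 * (n%:R - 1 + 2 * a)) < 1 - eta ->
  forall alg : online_alg R n n.+1,
  exists p v : 'I_n.+1 -> R,
    [/\ normalized p, normalized v, kvalue 3 p & kvalue 3 v] /\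
    pred_error p v <= 1 - eta /\
    ~ aEFX a v (run_alg alg p v).
Proof.
move=> n_ge3 /andP[a_gt0 a_le1] err_gt alg.
have n_ge3R : 3 <= n%:R :> R by rewrite (ler_nat R 3).
have err_gt0 : 0 < 1 - eta.
  by apply: lt_trans err_gt; rewrite divr_gt0 // mulr_gt0 //; lra.
pose m := Num.min (1 - eta) 2^-1 / n%:R.
have nm : n%:R * m = Num.min (1 - eta) 2^-1.
  by rewrite mulrC divfK // gt_eqF //; lra.
have m_gt0 : 0 < m by rewrite divr_gt0 ?lt_min ?err_gt0 ?invr_gt0 //; lra.
have nm_le_half : n%:R * m <= 2^-1 by rewrite nm ge_min lexx orbT.
have [p [v [inst [err nEFX]]]] := adversary_wins n_ge3 a_gt0 a_le1 m_gt0 nm_le_half alg.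
exists p, v; do 2!split => //.
by apply: le_trans err _; rewrite nm ge_min lexx.
Qed.
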